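(* Let $x\in\mathbf{S}$, let $v\in V$ with $\mathsf{supp}(v)\ne\emptyset$, and let $e=\{v,w\}\in\mathsf{T}(v)$. (E1) If $e\in E_1$, then $x(E(w))=1$ and $\mathsf{B}(w)=\{e\}$. (E2) If $e\in E_2$, then $x(E(w))=1$, $e\in\mathsf{B}(w)$, and $x(E[\sim_v e])\ge x(E[\sim_w e])$.
   Context: Setting: $G=(V,E)$ is a finite simple bipartite graph with $V=V_1\sqcup V_2$, every edge joining a vertex of $V_1$ to a vertex of $V_2$; an edge is identified with the set of its two endpoints. $E$ is partitioned into $E_1,E_2$. For $F\subseteq E$ and $v\in V$, $F(v)$ is the set of edges of $F$ incident to $v$. For every $v\in V$ there is a transitive and complete binary relation $\succsim_v$ on $E(v)\cup\{\emptyset\}$ with $e\succsim_v\emptyset$ and $\emptyset\not\succsim_v e$ for all $e\in E(v)$; $\succ_v$ and $\sim_v$ are its strict and indifference parts. For $x\in\mathbb{R}^E$, $x(F)=\sum_{e\in F}x(e)$. $E[\succ_v e]=\{f\in E(v): f\succ_v e\}$, $E[\sim_v e]=\{f\in E(v): f\sim_v e\}$. $\mathbf{S}$ is the set of $x\in\mathbb{R}_+^E$ with (1) $x(E(v))\le1$ for all $v\in V$; (2) $x(e)+\sum_{v\in e}x(E[\succ_v e])\ge1$ for all $e\in E_1$; (3) $x(E[\sim_v e])+\sum_{w\in e}x(E[\succ_w e])\ge1$ for all $e\in E_2$, $v\in e$. For $x\in\mathbf{S}$: $\mathsf{supp}=\{e\in E: x(e)>0\}$; for $v$ with $\mathsf{supp}(v)\neq\emptyset$,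 $\mathsf{T}(v)$ (resp. $\mathsf{B}(v)$) is the set of $e\in\mathsf{supp}(v)$ with $e\succsim_v f$ (resp. $f\succsim_v e$) for all $f\in\mathsf{supp}(v)$. *)

From mathcomp Require Import all_boot all_order all_algebra.
Set Implicit Arguments. Unset Strict Implicit. Unset Printing Implicit Defensive.
Import Order.TTheory GRing.Theory Num.Theory.
Local Open Scope ring_scope.

(* Bipartite graph: vertex set V = V1 + V2; an edge is identified with the
   pair (a,b) of its endpoints a in V1, b in V2 (so the graph is simple).
   The edge set E is a finite subset of V1 * V2. *)
Definition vert (V1 V2 : finType) : finType := (V1 + V2)%type.
Definition edge (V1 V2 : finType) : finType := (V1 * V2)%type.

Definition incident (V1 V2 : finType) (v : vert V1 V2) (e : edge V1 V2) : bool :=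
  match v with inl a => a == e.1 | inr b => b == e.2 end.

Definition Einc (V1 V2 : finType) (E : {set edge V1 V2}) (v : vert V1 V2)
  : {set edge V1 V2} := [set e in E | incident v e].

(* Preferences: pref v a b  means  a >=_v b, on E(v) \cup {emptyset},
   where None encodes emptyset. *)
Definition pref_dom (V1 V2 : finType) (E : {set edge V1 V2}) (v : vert V1 V2)
  (a : option (edge V1 V2)) : bool :=
  match a with None => true | Some e => e \in Einc E v end.

Definition pref_ok (V1 V2 : finType) (E : {set edge V1 V2})
  (pref : vert V1 V2 -> option (edge V1 V2) -> option (edge V1 V2) -> bool) : Prop :=
  forall v,
    (forall a b c, pref_dom E v a -> pref_dom E v b -> pref_dom E v c ->
        pref v a b -> pref v b c -> pref v a c) /\
    (forall a b, pref_dom E v a -> pref_dom E v b -> pref v a b || pref v b a) /\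
    (forall e, e \in Einc E v -> pref v (Some e) None /\ ~~ pref v None (Some e)).

Definition wpref (V1 V2 : finType)
  (pref : vert V1 V2 -> option (edge V1 V2) -> option (edge V1 V2) -> bool)
  v (e f : edge V1 V2) : bool := pref v (Some e) (Some f).
Definition spref (V1 V2 : finType)
  (pref : vert V1 V2 -> option (edge V1 V2) -> option (edge V1 V2) -> bool)
  v (e f : edge V1 V2) : bool := wpref pref v e f && ~~ wpref pref v f e.
Definition indiff (V1 V2 : finType)
  (pref : vert V1 V2 -> option (edge V1 V2) -> option (edge V1 V2) -> bool)
  v (e f : edge V1 V2) : bool := wpref pref v e f && wpref pref v f e.

Definition Esucc (V1 V2 : finType) (E : {set edge V1 V2})
  (pref : vert V1 V2 -> option (edge V1 V2) -> option (edge V1 V2) -> bool)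
  v (e : edge V1 V2) : {set edge V1 V2} :=
  [set f in Einc E v | spref pref v f e].
Definition Esim (V1 V2 : finType) (E : {set edge V1 V2})
  (pref : vert V1 V2 -> option (edge V1 V2) -> option (edge V1 V2) -> bool)
  v (e : edge V1 V2) : {set edge V1 V2} :=
  [set f in Einc E v | indiff pref v f e].

Definition xs (V1 V2 : finType) (R : realFieldType) (x : edge V1 V2 -> R)
  (F : {set edge V1 V2}) : R := \sum_(e in F) x e.

(* membership in the polytope S (x is only relevant on E) *)
Definition inS (V1 V2 : finType) (E E1 E2 : {set edge V1 V2})
  (pref : vert V1 V2 -> option (edge V1 V2) -> option (edge V1 V2) -> bool)
  (R : realFieldType) (x : edge V1 V2 -> R) : Prop :=
  (forall e, e \in E -> 0 <= x e) /\
  (forall v, xs x (Einc E v) <= 1) /\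
  (forall e, e \in E1 ->
     1 <= x e + \sum_(v : vert V1 V2 | incident v e) xs x (Esucc E pref v e)) /\
  (forall e v, e \in E2 -> incident v e ->
     1 <= xs x (Esim E pref v e)
          + \sum_(w : vert V1 V2 | incident w e) xs x (Esucc E pref w e)).

Definition supp (V1 V2 : finType) (E : {set edge V1 V2}) (R : realFieldType)
  (x : edge V1 V2 -> R) : {set edge V1 V2} := [set e in E | 0 < x e].

Definition suppv (V1 V2 : finType) (E : {set edge V1 V2}) (R : realFieldType)
  (x : edge V1 V2 -> R) v : {set edge V1 V2} := supp E x :&: Einc E v.

Definition Top (V1 V2 : finType) (E : {set edge V1 V2})
  (pref : vert V1 V2 -> option (edge V1 V2) -> option (edge V1 V2) -> bool)
  (R : realFieldType) (x : edge V1 V2 -> R) v : {set edge V1 V2} :=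
  [set e in suppv E x v | [forall f in suppv E x v, wpref pref v e f]].

Definition Bot (V1 V2 : finType) (E : {set edge V1 V2})
  (pref : vert V1 V2 -> option (edge V1 V2) -> option (edge V1 V2) -> bool)
  (R : realFieldType) (x : edge V1 V2 -> R) v : {set edge V1 V2} :=
  [set e in suppv E x v | [forall f in suppv E x v, wpref pref v f e]].

(* The top edge e = {v, w} of v beats every edge in the support at v, so
   x(E[>_v e]) = 0 and the stability inequality of e is carried entirely by
   w's side: x(E[~_w e]) + x(E[>_w e]) >= 1 (with x(e) in place of the first
   term when e is in E_1).  Since x(E(w)) <= 1 and x >= 0, this forces
   x(E(w)) = 1 and confines the support at w to edges weakly preferred to e,
   which makes e a bottom edge at w.  Comparing with the constraint at v gives
   x(E[~_v e]) >= x(E[~_w e]). *)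
From mathcomp Require Import all_boot all_order all_algebra.
From mathcomp Require Import lra.
Import Order.TTheory GRing.Theory Num.Theory.
Local Open Scope ring_scope.

Lemma saturated_sum_support {T : finType} {R : realFieldType} {x : T -> R}
    {C S : {set T}} :
  (forall f, f \in C -> 0 <= x f) -> S \subset C ->
  \sum_(f in C) x f <= 1 -> 1 <= \sum_(f in S) x f ->
  [/\ \sum_(f in C) x f = 1, \sum_(f in S) x f = 1 &
      forall f, f \in C -> 0 < x f -> f \in S].
Proof.
move=> x_ge0 sSC le1 ge1.
have splitC : \sum_(f in C) x f = \sum_(f in S) x f + \sum_(f in C :\: S) x f.
  by rewrite (big_setID S) (setIidPr sSC).
have rest_ge0 : 0 <= \sum_(f in C :\: S) x f.
  by apply: sumr_ge0 => f /setDP[fC _]; exact: x_ge0.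
have rest0 : \sum_(f in C :\: S) x f = 0 by lra.
split; [lra | lra |] => f fC xf_gt0.
apply: contraTT xf_gt0 => fNS; rewrite -leNgt.
rewrite (psumr_eq0P _ rest0) //; last by rewrite inE fNS.
by move=> g /setDP[gC _]; exact: x_ge0.
Qed.

Lemma incident_other {V1 V2 : finType} {u v w : vert V1 V2} {e : edge V1 V2} :
  incident u e -> incident v e -> incident w e -> v != w -> (u == v) || (u == w).
Proof.
by case: u v w => [a|a] [b|b] [c|c] /= /eqP ua /eqP va /eqP wa; subst; rewrite ?eqxx.
Qed.

Lemma sum_incident {V1 V2 : finType} {R : realFieldType} (F : vert V1 V2 -> R)
    {v w e} :
  incident v e -> incident w e -> v != w ->
  \sum_(u | incident u e) F u = F v + F w.
Proof.
move=> ve we vw.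
rewrite (bigD1 v) //= (bigD1 w) /=; last by rewrite we eq_sym vw.
rewrite big1 ?addr0 // => u /andP[/andP[ue uv] uw].
by have := incident_other ue ve we vw; rewrite (negPf uv) (negPf uw).
Qed.

Section StableEdges.

Context {V1 V2 : finType} {E : {set edge V1 V2}}.
Context {pref : vert V1 V2 -> option (edge V1 V2) -> option (edge V1 V2) -> bool}.
Context {R : realFieldType} {x : edge V1 V2 -> R}.

Lemma xsU (A B : {set edge V1 V2}) :
  [disjoint A & B] -> xs x (A :|: B) = xs x A + xs x B.
Proof. by move=> dAB; rewrite /xs -bigU //; apply: eq_bigl => f; rewrite !inE. Qed.

Lemma in_suppv v f : (f \in suppv E x v) = (f \in Einc E v) && (0 < x f).
Proof. by rewrite !inE; case: (f \in E); rewrite //= andbC. Qed.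

Lemma wpref_refl : pref_ok E pref -> forall w e, e \in Einc E w -> wpref pref w e e.
Proof.
move=> pref_okE w e ew; have [_ [total _]] := pref_okE w.
by have := total (Some e) (Some e) ew ew; rewrite orbb.
Qed.

Lemma Esucc_sub w e : Esucc E pref w e \subset Einc E w.
Proof. by apply/subsetP => f; rewrite inE => /andP[]. Qed.

Lemma Esim_sub w e : Esim E pref w e \subset Einc E w.
Proof. by apply/subsetP => f; rewrite inE => /andP[]. Qed.

Lemma Esim_Esucc_disjoint w e : [disjoint Esim E pref w e & Esucc E pref w e].
Proof.
rewrite -setI_eq0; apply/eqP/setP => f; rewrite !inE /indiff /spref.
by case: (wpref pref w e f); rewrite ?andbF.
Qed.

Lemma notin_Esucc w e : e \notin Esucc E pref w e.
Proof. by rewrite inE /spref; case: wpref; rewrite ?andbF. Qed.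

Hypothesis x_ge0 : forall e, e \in E -> 0 <= x e.

Lemma xs_Esucc_Top {v e} : e \in Top E pref x v -> xs x (Esucc E pref v e) = 0.
Proof.
rewrite inE => /andP[_ /forall_inP e_top].
apply: big1 => f; rewrite inE => /andP[fv /andP[_ not_ef]].
have fE : f \in E by move: fv; rewrite inE => /andP[].
have := x_ge0 _ fE; rewrite le_eqVlt => /orP[/eqP<- //|xf].
by rewrite e_top ?in_suppv ?fv in not_ef.
Qed.

Lemma saturated_vertex {w} {S : {set edge V1 V2}} :
  S \subset Einc E w -> xs x (Einc E w) <= 1 -> 1 <= xs x S ->
  [/\ xs x (Einc E w) = 1, xs x S = 1 & suppv E x w \subset S].
Proof.
move=> sSw le1 ge1.
have x_ge0w : forall f, f \in Einc E w -> 0 <= x f.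
  by move=> f; rewrite inE => /andP[fE _]; exact: x_ge0.
have [sat satS suppS] := saturated_sum_support x_ge0w sSw le1 ge1.
split=> //; apply/subsetP => f; rewrite in_suppv => /andP[fw xf].
exact: suppS.
Qed.

Lemma in_Bot {w e} :
  e \in suppv E x w ->
  suppv E x w \subset Esim E pref w e :|: Esucc E pref w e ->
  e \in Bot E pref x w.
Proof.
move=> esupp ssupp; rewrite inE esupp /=.
apply/forall_inP => f /(subsetP ssupp); rewrite !inE.
by case/orP=> /andP[_ /andP[]].
Qed.

Lemma Bot_set1 {w e} :
  pref_ok E pref -> e \in suppv E x w ->
  suppv E x w \subset e |: Esucc E pref w e ->
  Bot E pref x w = [set e].
Proof.
move=> pref_okE esupp ssupp.
have ew : e \in Einc E w by move: esupp; rewrite in_suppv => /andP[].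
apply/eqP; rewrite eqEsubset sub1set andbC.
apply/andP; split.
  apply: in_Bot esupp _; apply: subset_trans ssupp _.
  by apply: setSU; rewrite sub1set inE ew /indiff wpref_refl.
apply/subsetP => f /setIdP[fsupp /forall_inP f_bot].
have /(subsetP ssupp) := fsupp; rewrite !inE => /orP[// | /andP[_ /andP[_]]].
by rewrite f_bot.
Qed.

End StableEdges.

Theorem lemma4p5 (V1 V2 : finType) (E E1 E2 : {set edge V1 V2})
  (pref : vert V1 V2 -> option (edge V1 V2) -> option (edge V1 V2) -> bool)
  (R : realFieldType) (x : edge V1 V2 -> R) :
  E1 :|: E2 = E -> [disjoint E1 & E2] ->
  pref_ok E pref ->
  inS E E1 E2 pref x ->
  forall (v w : vert V1 V2) (e : edge V1 V2),
    suppv E x v != set0 ->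
    incident v e -> incident w e -> v != w ->
    e \in Top E pref x v ->
    (e \in E1 -> xs x (Einc E w) = 1 /\ Bot E pref x w = [set e]) /\
    (e \in E2 -> [/\ xs x (Einc E w) = 1, e \in Bot E pref x w &
                     xs x (Esim E pref w e) <= xs x (Esim E pref v e)]).
Proof.
move=> _ _ pref_okE [x_ge0 [le1 [stab1 stab2]]] v w e _ ve we vw e_top.
have esupp_w : e \in suppv E x w.
  by move: e_top; rewrite !inE => /andP[/and3P[/andP[-> ->] _ _] _]; rewrite we.
have succ_w : \sum_(u | incident u e) xs x (Esucc E pref u e) = xs x (Esucc E pref w e).
  by rewrite (sum_incident _ ve we vw) (xs_Esucc_Top x_ge0 e_top) add0r.
have ew : e \in Einc E w by move: esupp_w; rewrite in_suppv => /andP[].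
split=> [e1 | e2].
- have stab_w : 1 <= xs x (e |: Esucc E pref w e).
    by move: (stab1 e e1); rewrite succ_w /xs big_setU1 ?notin_Esucc.
  have sub_w : e |: Esucc E pref w e \subset Einc E w.
    by rewrite subUset sub1set ew Esucc_sub.
  have [sat _ ssupp] := saturated_vertex x_ge0 sub_w (le1 w) stab_w.
  by rewrite (Bot_set1 pref_okE esupp_w ssupp).
- have stab_w : 1 <= xs x (Esim E pref w e :|: Esucc E pref w e).
    by rewrite xsU ?Esim_Esucc_disjoint // -succ_w; exact: stab2.
  have sub_w : Esim E pref w e :|: Esucc E pref w e \subset Einc E w.
    by rewrite subUset Esim_sub Esucc_sub.
  have [sat sat_w ssupp] := saturated_vertex x_ge0 sub_w (le1 w) stab_w.
  split=> //; first exact: in_Bot esupp_w ssupp.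
  have := stab2 e v e2 ve; rewrite succ_w.
  move: sat_w; rewrite xsU ?Esim_Esucc_disjoint //; lra.
Qed.
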